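(* Let $f:\mathbb{R}^{N}\rightarrow (-\infty ,\infty ]$ with $m_{f}:=\inf f>-\infty$, and suppose there are constants $c>0$ and $\alpha>0$ such that $f(x)\geq h(x):=c|x|^{\alpha }$ for $|x|$ large enough. Then for every $z<m_{f}$, every open ball $B$ centered at the origin such that $f\geq h\geq 2z$ outside $B$, and every Young function $\phi$, $$\|(\check{f}-z)^{-1}\|_{\phi }\leq 2\|h^{-1}\|_{\phi ,\mathbb{R}^{N}\setminus B}+(m_{f}-z)^{-1}\|\chi_{B}\|_{\phi }.$$ If $\phi$ is invertible with inverse $\psi$, this also reads $$\|(\check{f}-z)^{-1}\|_{\phi }\leq 2\|h^{-1}\|_{\phi ,\mathbb{R}^{N}\setminus B}+(m_{f}-z)^{-1}[\psi(\mu_{N}(B)^{-1})]^{-1}.$$ In particular, if $\|h^{-1}\|_{\phi,\mathbb{R}^{N}\setminus B}<\infty$, then $\|(\check{f}-z)^{-1}\|_\phi<\infty$.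
   Context: $\mu_N$ is Lebesgue measure, $\chi_B$ the indicator function of $B$. For $k\ge0$, $k^{-1}:=1/k$ (with $1/0=\infty$). A Young function is a nonconstant $\phi:[0,\infty]\to[0,\infty]$ with $\phi(0)=0$, nondecreasing, convex and left continuous; for measurable $k$ on a measurable set $E\subset\mathbb{R}^N$, $\|k\|_{\phi,E}:=\inf\{r>0:\int_{E}\phi(r^{-1}|k|)\le 1\}$ ($=\infty$ if no such $r$), and $\|k\|_\phi:=\|k\|_{\phi,\mathbb{R}^N}$. Enclosing balls: for nonempty bounded $X\subset\mathbb{R}^N$, $\overline{B}_X$ is the unique closed ball of minimal diameter containing $X$; $\overline{B}_X:=\mathbb{R}^N$ if $X$ unbounded; $\overline{B}_\emptyset:=\{0\}$. For $f:\mathbb{R}^N\to[-\infty,\infty]$, $\rho^-_f(\xi)\in[0,\infty]$ is the radius of $\overline{B}_{\{f<\xi\}}$, $\gamma^-_f(t):=\sup\{\xi:\rho^-_f(\xi)\le t\}$ for $t\ge0$, and $\check f(x):=\gamma^-_f(|x|)$. *)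

From HB Require Import structures.
From mathcomp Require Import all_boot all_order all_algebra.
From mathcomp Require Import all_classical all_reals all_analysis.
Set Implicit Arguments.
Unset Strict Implicit.
Unset Printing Implicit Defensive.
Import Order.TTheory GRing.Theory Num.Theory.
Local Open Scope classical_set_scope.
Local Open Scope ring_scope.

Definition Rdisp (R : realType) : measure_display :=
  ltac:(let t := type of (measurableTypeR R : measurableType _) in
        match t with measurableType ?d => exact d end).

(** R^n, realised as the iterated product (((tt, x_1), x_2), ..., x_n)
    equipped with the product (Borel) sigma-algebra. *)
Fixpoint RNdisp (R : realType) (n : nat) : measure_display :=
  match n with
  | 0 => default_measure_display
  | n.+1 => (RNdisp R n, Rdisp R).-prod
  end.

Fixpoint RN (R : realType) (n : nat) : measurableType (RNdisp R n) :=
  match n return measurableType (RNdisp R n) with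
  | 0 => unit
  | n.+1 => (RN R n * measurableTypeR R)%type
  end.

Fixpoint lebN (R : realType) (n : nat) : {measure set (RN R n) -> \bar R} :=
  match n return {measure set (RN R n) -> \bar R} with
  | 0 => @dirac _ unit tt R
  | n.+1 => ((@lebN R n) \x (@lebesgue_measure R))%E
  end.

Fixpoint sqnorm (R : realType) (n : nat) : RN R n -> R :=
  match n return RN R n -> R with
  | 0 => fun _ => 0
  | n.+1 => fun x => sqnorm x.1 + x.2 ^+ 2
  end.

Fixpoint sqdist (R : realType) (n : nat) : RN R n -> RN R n -> R :=
  match n return RN R n -> RN R n -> R with
  | 0 => fun _ _ => 0
  | n.+1 => fun x y => sqdist x.1 y.1 + (x.2 - y.2) ^+ 2
  end.

Definition enorm (R : realType) (n : nat) (x : RN R n) : R := Num.sqrt (sqnorm x).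
Definition edist (R : realType) (n : nat) (x y : RN R n) : R := Num.sqrt (sqdist x y).

Local Open Scope ereal_scope.

(** k^{-1} := 1/k for k in [0, +oo], with 1/0 = +oo and 1/(+oo) = 0
    (the value at negative arguments is irrelevant). *)
Definition einv (R : realType) (k : \bar R) : \bar R :=
  match k with
  | r%:E => if r == 0%R then +oo else (r^-1)%:E
  | +oo => 0
  | -oo => 0
  end.

(** Young functions phi : [0,+oo] -> [0,+oo] (modelled on \bar R; only the
    values on [0,+oo] matter). *)
Definition young (R : realType) (phi : \bar R -> \bar R) : Prop :=
  phi 0 = 0 /\
  [/\
      (exists s t : \bar R, [/\ 0 <= s, 0 <= t & phi s <> phi t]),
      (forall t : \bar R, 0 <= t -> 0 <= phi t),
      (forall s t : \bar R, 0 <= s -> s <= t -> phi s <= phi t),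
      (forall (s t : \bar R) (l : R), 0 <= s -> 0 <= t -> (0 <= l <= 1)%R ->
         phi (l%:E * s + (1 - l)%:E * t) <= l%:E * phi s + (1 - l)%:E * phi t)
    &
      (forall t : \bar R, 0 < t ->
         phi x @[x --> within (fun u => u < t) (nbhs t)] --> phi t)].

Definition lux (R : realType) (n : nat) (phi : \bar R -> \bar R)
    (E : set (RN R n)) (k : RN R n -> \bar R) : \bar R :=
  ereal_inf [set r%:E | r in [set r : R | (0 < r)%R /\
     \int[lebN R n]_(x in E) phi ((r^-1)%:E * `|k x|) <= 1]].

(** Closed Euclidean ball and radius of the minimal enclosing closed ball
    \overline{B}_X : the minimal radius of a closed ball containing X; this is
    +oo when X is unbounded (\overline{B}_X = R^n) and 0 when X is empty
    (\overline{B}_X = {0}). *)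
Definition cball (R : realType) (n : nat) (c : RN R n) (r : R) : set (RN R n) :=
  [set y | (edist y c <= r)%R].

Definition encl_radius (R : realType) (n : nat) (X : set (RN R n)) : \bar R :=
  ereal_inf [set r%:E | r in [set r : R | (0 <= r)%R /\
     exists c : RN R n, X `<=` cball c r]].

Definition rho_minus (R : realType) (n : nat) (f : RN R n -> \bar R)
    (xi : \bar R) : \bar R :=
  encl_radius [set x | f x < xi].

Definition gamma_minus (R : realType) (n : nat) (f : RN R n -> \bar R)
    (t : R) : \bar R :=
  ereal_sup [set xi : \bar R | rho_minus f xi <= t%:E].

Definition fcheck (R : realType) (n : nat) (f : RN R n -> \bar R)
    (x : RN R n) : \bar R :=
  gamma_minus f (enorm x).

(* Off the ball B, the sublevel set {f < h x} lies in the closed ball of radius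
   |x| (h is radially increasing), so \check f >= h >= 2z there and
   (\check f - z)^-1 <= 2 h^-1; on B, \check f >= m_f gives
   (\check f - z)^-1 <= (m_f - z)^-1.  Splitting the modular of phi with the
   convexity weights 2a/L and Kb/L (L = 2a + Kb) yields the Luxemburg-norm
   triangle inequality.  The modular of the indicator of B at scale b is
   phi(1/b) mu(B), which gives the form with psi; and a finite norm of h^-1 on a
   set containing a shell of unit measure forces phi <= 1 somewhere on (0, oo),
   which makes the norm of the indicator finite. *)

From Pilot Require Import Defs.
From HB Require Import structures.
From mathcomp Require Import all_boot all_order all_algebra.
From mathcomp Require Import all_classical all_reals all_analysis.
From mathcomp Require Import measurable_realfun ring lra.
Set Implicit Arguments.
Unset Strict Implicit.
Unset Printing Implicit Defensive.
Import Order.TTheory GRing.Theory Num.Theory.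
Local Open Scope classical_set_scope.
Local Open Scope ring_scope.

Section euclidean_space.
Context (R : realType).

Fixpoint originN (n : nat) : RN R n :=
  match n return RN R n with 0 => tt | n.+1 => (originN n, 0) end.

Lemma sqdist_origin n (x : RN R n) : sqdist x (originN n) = sqnorm x.
Proof. by elim: n x => [//|n IH] [x t] /=; rewrite IH subr0. Qed.

Lemma sqnorm_ge0 n (x : RN R n) : 0 <= sqnorm x.
Proof. by elim: n x => [//|n IH] [x t] /=; rewrite addr_ge0 ?sqr_ge0. Qed.

Lemma enorm_ge0 n (x : RN R n) : 0 <= enorm x.
Proof. exact: sqrtr_ge0. Qed.

Lemma enorm_lt_sqnorm n (x : RN R n) (r : R) : 0 <= r ->
  (enorm x < r) = (sqnorm x < r ^+ 2).
Proof.
move=> r0; rewrite -(ltr_pXn2r (n := 2)) ?nnegrE ?enorm_ge0 //.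
by rewrite sqr_sqrtr // sqnorm_ge0.
Qed.

Lemma measurable_sqnorm n : measurable_fun setT (@sqnorm R n).
Proof.
elim: n => [|n IH] /=; first exact: measurable_cst.
apply: measurable_funD; first exact: measurableT_comp IH measurable_fst.
exact: measurable_funX measurable_snd.
Qed.

Lemma measurable_enorm n : measurable_fun setT (@enorm R n).
Proof.
apply: measurableT_comp (@measurable_sqnorm n).
exact: continuous_measurable_fun (@sqrt_continuous R).
Qed.

Lemma measurable_ball0 n (r : R) : measurable [set x : RN R n | enorm x < r].
Proof.
have := @measurable_enorm n measurableT _ (measurable_itv `]-oo, r[).
by rewrite setTI; congr measurable; apply/seteqP; split => x /=; rewrite in_itv.
Qed.

Fixpoint cubeN (n : nat) (a b : R) : set (RN R n) :=
  match n return set (RN R n) with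
  | 0 => setT
  | n.+1 => @cubeN n a b `*` `[a, b]
  end.
Arguments cubeN : clear implicits.

Lemma measurable_cubeN n a b : measurable (cubeN n a b).
Proof.
elim: n => [|n IH] /=; first exact: measurableT.
by apply: measurableX => //; exact: measurable_itv.
Qed.

Lemma lebN_cubeN n a b : a <= b -> lebN R n (cubeN n a b) = ((b - a) ^+ n)%:E.
Proof.
move=> ab; elim: n => [|n IH] /=; first by rewrite diracE in_setT.
rewrite product_measure1E; [|exact: measurable_cubeN|exact: measurable_itv].
have := @lebesgue_measure_itv R `[a, b]; rewrite /= lte_fin => ->.
rewrite IH; move: ab; rewrite le_eqVlt => /predU1P[->|ab].
  by rewrite ltxx mule0 subrr expr0n.
by rewrite ab -EFinB -EFinM exprSr.
Qed.

Lemma sqnorm_cubeN_le n d (x : RN R n) : 0 <= d -> cubeN n 0 d x ->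
  sqnorm x <= n%:R * d ^+ 2.
Proof.
move=> d0; elim: n x => [[]|n IH [y t]] /=; first by rewrite mul0r.
move=> [/IH hy] /=; rewrite in_itv /= => /andP[t0 td].
have : t ^+ 2 <= d ^+ 2 by nra.
by rewrite -[n.+1]addn1 natrD; nra.
Qed.

Lemma cubeN_sqnorm_le n d (x : RN R n) : 0 <= d -> sqnorm x <= d ^+ 2 ->
  cubeN n (- d) d x.
Proof.
move=> d0; elim: n x => [[]|n IH [y t]] //= h.
have := sqnorm_ge0 y; split; first by apply: IH; nra.
by rewrite /= in_itv /=; apply/andP; split; nra.
Qed.

Lemma lebN_ball0_fin_gt0 n (r : R) : 0 < r ->
  exists2 m, lebN R n [set x | enorm x < r] = m%:E & 0 < m.
Proof.
move=> r0; pose d := r / (n%:R + 1).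
have d0 : 0 < d by rewrite divr_gt0 // ltr_wpDl.
have up : (lebN R n [set x | (enorm x < r)%R] <= lebN R n (cubeN n (- r) r))%E.
  apply: le_measure; rewrite ?inE; [exact: measurable_ball0|exact: measurable_cubeN|].
  move=> x /=; rewrite enorm_lt_sqnorm ?ltW // => h.
  by apply: cubeN_sqnorm_le; rewrite ?ltW.
have low : (lebN R n (cubeN n 0 d) <= lebN R n [set x | (enorm x < r)%R])%E.
  apply: le_measure; rewrite ?inE; [exact: measurable_cubeN|exact: measurable_ball0|].
  move=> x /= /(sqnorm_cubeN_le (ltW d0)) h; rewrite enorm_lt_sqnorm ?ltW //.
  apply: le_lt_trans h _.
  have -> : r = d * (n%:R + 1) by rewrite /d divfK // gt_eqF // ltr_wpDl.
  have : 0 <= n%:R :> R by [].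
  by nra.
have nr : - r <= r by rewrite -subr_ge0 opprK addr_ge0 // ltW.
rewrite (lebN_cubeN n (ltW d0)) in low; rewrite (lebN_cubeN n nr) in up.
move: low up; case: (lebN R n _) => [m| |] //= low _; exists m => //.
by rewrite lee_fin subr0 in low; apply: lt_le_trans low; exact: exprn_gt0.
Qed.

(* The shell is the slab [0,1]^(n-1) x [r, r+1], which needs n >= 1. *)
Lemma exists_unit_measure_shell n (r : R) : (0 < n)%N -> 0 < r ->
  exists (S : set (RN R n)) (D : R), [/\ measurable S, lebN R n S = 1%:E &
    forall x, S x -> r <= enorm x <= D].
Proof.
case: n => [//|n] _ r0.
exists (cubeN n 0 1 `*` `[r, r + 1]), (Num.sqrt (n%:R + (r + 1) ^+ 2)); split.
- by apply: measurableX; [exact: measurable_cubeN|exact: measurable_itv].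
- rewrite /= product_measure1E; [|exact: measurable_cubeN|exact: measurable_itv].
  have := @lebesgue_measure_itv R `[r, r + 1]; rewrite /= lte_fin ltrDl ltr01 => ->.
  by rewrite lebN_cubeN // subr0 expr1n -EFinB addrAC subrr add0r mul1e.
- move=> [y t] [/= /(sqnorm_cubeN_le ler01) hy]; rewrite /= in_itv /= => /andP[rt tr].
  rewrite expr1n mulr1 in hy; have := sqnorm_ge0 y => y0.
  apply/andP; split; first by rewrite leNgt enorm_lt_sqnorm ?ltW //=; apply/negP; nra.
  by apply: ler_wsqrtr => /=; nra.
Qed.

End euclidean_space.

Local Open Scope ereal_scope.

Section ge0_integral_without_measurability.
Context d (T : measurableType d) (R : realType) (mu : {measure set T -> \bar R}).
Import HBNNSimple.

Lemma ge0_le_integral_dom (D E : set T) (f g : T -> \bar R) :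
  (forall x, D x -> 0 <= f x) -> (forall x, E x -> 0 <= g x) ->
  (forall x, D x -> E x /\ f x <= g x) ->
  \int[mu]_(x in D) f x <= \int[mu]_(x in E) g x.
Proof.
move=> f0 g0 fg; rewrite (ge0_integralE mu f0) (ge0_integralE mu g0).
apply: ge_ereal_sup => _ [s hs <-]; apply: ereal_sup_ubound; exists s => //= x.
apply: (le_trans (hs x)); rewrite /patch; case: ifPn => [|_].
  by rewrite inE => /fg [Ex fgx]; rewrite ifT ?inE.
by case: ifPn => // /[!inE] /g0.
Qed.

Lemma sintegral_restrict_le (A : set T) (mA : measurable A) (s : {nnsfun T >-> R})
    (g : T -> \bar R) (l : R) : (0 < l)%R ->
  (forall x, A x -> 0 <= g x) -> (forall x, A x -> (s x)%:E <= l%:E * g x) ->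
  sintegral mu (proj_nnsfun s mA) <= l%:E * \int[mu]_(x in A) g x.
Proof.
move=> l0 g0 sg; have il0 : (0 <= l^-1)%R by rewrite invr_ge0 ltW.
have -> : sintegral mu (proj_nnsfun s mA) =
    sintegral mu (cst l \* scale_nnsfun (proj_nnsfun s mA) il0)%R.
  by apply: eq_sintegral => x /=; rewrite mulrA mulfV ?gt_eqF // mul1r.
rewrite sintegralrM; apply: lee_wpmul2l; first by rewrite lee_fin ltW.
rewrite (ge0_integralE mu g0); apply: ereal_sup_ubound.
exists (scale_nnsfun (proj_nnsfun s mA) il0) => //= x.
rewrite /patch /mindic indicE; case: ifPn => [/[!inE] xA|_]; last by rewrite !mulr0.
by rewrite mulr1 EFinM lee_pdivrMl //; exact: sg.
Qed.

Lemma ge0_integral_split_le (A : set T) (mA : measurable A) (F g1 g2 : T -> \bar R)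
    (l m : R) : (0 < l)%R -> (0 < m)%R -> (forall x, 0 <= F x) ->
  (forall x, A x -> 0 <= g1 x) -> (forall x, (~` A) x -> 0 <= g2 x) ->
  (forall x, A x -> F x <= l%:E * g1 x) -> (forall x, (~` A) x -> F x <= m%:E * g2 x) ->
  \int[mu]_x F x <= l%:E * \int[mu]_(x in A) g1 x + m%:E * \int[mu]_(x in ~` A) g2 x.
Proof.
move=> l0 m0 F0 g10 g20 Fg1 Fg2; have mAc := measurableC mA.
rewrite (@ge0_integralE _ _ _ mu setT F (fun x _ => F0 x)).
apply: ge_ereal_sup => _ [s hs <-].
have sF x : (s x)%:E <= F x by have := hs x; rewrite /patch ifT // inE.
have -> : sintegral mu s =
    sintegral mu (proj_nnsfun s mA) + sintegral mu (proj_nnsfun s mAc).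
  rewrite -sintegralD; apply: eq_sintegral => x /=; rewrite /mindic !indicE.
  have [xA|xA] := pselect (A x).
    by rewrite mem_set // memNset /= ?mulr1 ?mulr0 ?addr0 //; exact.
  by rewrite memNset // mem_set //= mulr1 mulr0 add0r.
apply: leeD; apply: sintegral_restrict_le => // x Ax.
  exact: le_trans (sF x) (Fg1 x Ax).
exact: le_trans (sF x) (Fg2 x Ax).
Qed.

End ge0_integral_without_measurability.

Lemma young_scale_le (R : realType) (phi : \bar R -> \bar R) (s : \bar R) (l : R) :
  young phi -> 0 <= s -> (0 <= l <= 1)%R -> phi (l%:E * s) <= l%:E * phi s.
Proof.
move=> [phi0 [_ _ _ convex _]] s0 l01.
by have := convex s 0 l s0 (lexx _) l01; rewrite mule0 adde0 phi0 mule0 adde0.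
Qed.

Lemma young_le1_of_integral d (T : measurableType d) (R : realType)
    (mu : {measure set T -> \bar R}) (phi : \bar R -> \bar R) (E S : set T)
    (g : T -> \bar R) (t : R) : young phi -> measurable S -> mu S = 1 ->
  (forall x, E x -> 0 <= g x) -> (forall x, S x -> E x /\ t%:E <= g x) -> (0 <= t)%R ->
  \int[mu]_(x in E) phi (g x) <= 1 -> phi t%:E <= 1.
Proof.
move=> [_ [_ phi_ge0 phi_mono _ _]] mS muS g0 Sg t0; apply: le_trans.
rewrite -[phi _]mule1 -muS -integral_cst //.
apply: ge0_le_integral_dom => [x _|x Ex|x Sx]; first exact: phi_ge0.
  exact/phi_ge0/g0.
by have [Ex tg] := Sg x Sx; split => //; exact: phi_mono.
Qed.

Lemma ereal_inf_lincomb_le (R : realType) (X : \bar R) (Sa Sb : set R) (A K : R) :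
  (0 < A)%R -> (0 < K)%R ->
  (forall a, Sa a -> (0 < a)%R) -> (forall b, Sb b -> (0 < b)%R) ->
  (forall a b, Sa a -> Sb b -> X <= (A * a + K * b)%:E) ->
  X <= A%:E * ereal_inf (EFin @` Sa) + K%:E * ereal_inf (EFin @` Sb).
Proof.
move=> A0 K0 Sa0 Sb0 XS.
have inf_ge0 (S : set R) : (forall a, S a -> (0 < a)%R) -> 0 <= ereal_inf (EFin @` S).
  by move=> S0; apply: le_ereal_inf_tmp => _ [a /S0 a0 <-]; rewrite lee_fin ltW.
move: (inf_ge0 _ Sa0) (inf_ge0 _ Sb0).
set ia := ereal_inf _; set ib := ereal_inf _ => ia0 ib0.
have Kib0 : 0 <= K%:E * ib by rewrite mule_ge0 // lee_fin ltW.
case Ea: ia ia0 => [a0| |] // ia0; last first.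
  by rewrite mulry gtr0_sg // mul1e addye ?leey // gt_eqF // (lt_le_trans _ Kib0) ?ltNy0.
case Eb: ib ib0 Kib0 => [b0| |] // ib0 Kib0; last first.
  by rewrite mulry gtr0_sg // mul1e addey ?leey.
rewrite lee_fin in ia0 ib0; apply/lee_addgt0Pr => e e0.
pose e' := (e / (A + K))%R.
have e'0 : (0 < e')%R by rewrite divr_gt0 // addr_gt0.
have [_ [a Saa <-] lta] : exists2 y, (EFin @` Sa) y & y < (a0 + e')%:E.
  by apply: ereal_inf_lt; rewrite -/ia Ea lte_fin ltrDl.
have [_ [b Sbb <-] ltb] : exists2 y, (EFin @` Sb) y & y < (b0 + e')%:E.
  by apply: ereal_inf_lt; rewrite -/ib Eb lte_fin ltrDl.
apply: le_trans (XS a b Saa Sbb) _; rewrite -!EFinM -!EFinD lee_fin.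
rewrite lte_fin in lta ltb.
have -> : e = ((A + K) * e')%R by rewrite /e' mulrC divfK // gt_eqF // addr_gt0.
have : (A * a <= A * (a0 + e'))%R by rewrite ler_pM2l // ltW.
have : (K * b <= K * (b0 + e'))%R by rewrite ler_pM2l // ltW.
by lra.
Qed.

Section luxemburg_norm.
Context (R : realType) (n : nat) (phi : \bar R -> \bar R).
Hypothesis yphi : young phi.

Lemma lux_ge0 (E : set (RN R n)) (k : RN R n -> \bar R) : 0 <= lux phi E k.
Proof. by apply: le_ereal_inf_tmp => _ [r [r0 _] <-]; rewrite lee_fin ltW. Qed.

Lemma lux_le (E : set (RN R n)) (k : RN R n -> \bar R) (r : R) : (0 < r)%R ->
  \int[lebN R n]_(x in E) phi ((r^-1)%:E * `|k x|) <= 1 -> lux phi E k <= r%:E.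
Proof. by move=> r0 hr; apply: ereal_inf_lbound; exists r. Qed.

Lemma lux_le_setT (E : set (RN R n)) (k : RN R n -> \bar R) :
  lux phi E k <= lux phi setT k.
Proof.
have [_ [_ phi_ge0 _ _ _]] := yphi.
apply: le_ereal_inf => _ [r [r0 Ir] <-]; exists r => //; split => //.
apply: le_trans Ir; apply: ge0_le_integral_dom => x _ //;
  by apply: phi_ge0; rewrite mule_ge0 // lee_fin invr_ge0 ltW.
Qed.

Lemma lux_eq0 (E : set (RN R n)) (k : RN R n -> \bar R) :
  (forall x, k x = 0) -> lux phi E k = 0.
Proof.
have [phi0 _] := yphi; move=> k0; apply/eqP; rewrite eq_le lux_ge0 andbT.
apply/lee_addgt0Pr => e e0; rewrite add0e; apply: lux_le => //.
by rewrite (eq_integral (cst 0)) ?integral0 // => x _; rewrite k0 abse0 mule0 phi0.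
Qed.

Let arg_ge0 (r : R) (y : \bar R) : (0 < r)%R -> 0 <= (r^-1)%:E * `|y|.
Proof. by move=> r0; rewrite mule_ge0 // lee_fin invr_ge0 ltW. Qed.

(* Convexity of phi with the weights A a / L and K b / L, where L = A a + K b. *)
Lemma modular_split_le (B : set (RN R n)) (u g v : RN R n -> \bar R) (A K a b : R) :
  measurable B -> (0 < A)%R -> (0 < K)%R -> (0 < a)%R -> (0 < b)%R ->
  (forall x, ~ B x -> `|u x| <= A%:E * `|g x|) ->
  (forall x, B x -> `|u x| <= K%:E * `|v x|) ->
  \int[lebN R n]_(x in ~` B) phi ((a^-1)%:E * `|g x|) <= 1 ->
  \int[lebN R n]_(x in B) phi ((b^-1)%:E * `|v x|) <= 1 ->
  \int[lebN R n]_(x in setT) phi (((A * a + K * b)^-1)%:E * `|u x|) <= 1.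
Proof.
move=> mB A0 K0 a0 b0 ug uv Ig Iv.
have [_ [_ phi_ge0 phi_mono _ _]] := yphi.
set L := (A * a + K * b)%R; have L0 : (0 < L)%R by rewrite addr_gt0 // mulr_gt0.
pose wa := (A * a / L)%R; pose wb := (K * b / L)%R.
have wa0 : (0 < wa)%R by rewrite divr_gt0 // mulr_gt0.
have wb0 : (0 < wb)%R by rewrite divr_gt0 // mulr_gt0.
have wab : (wa + wb = 1)%R by rewrite -mulrDl divff // gt_eqF.
have wa1 : (0 <= wa <= 1)%R by rewrite ltW //=; lra.
have wb1 : (0 <= wb <= 1)%R by rewrite ltW //=; lra.
have weight (l C c : R) (y w : \bar R) : (0 < C)%R -> (0 < c)%R -> l = (C * c / L)%R ->
    (0 <= l <= 1)%R -> `|y| <= C%:E * `|w| ->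
    phi ((L^-1)%:E * `|y|) <= l%:E * phi ((c^-1)%:E * `|w|).
  move=> C0 c0 -> l1 yw; apply: le_trans (young_scale_le yphi (arg_ge0 _ c0) l1).
  apply: phi_mono; first exact: arg_ge0.
  rewrite muleA -EFinM; have -> : (C * c / L * c^-1 = L^-1 * C)%R.
    by field; apply/andP; split; rewrite gt_eqF.
  by rewrite EFinM -muleA lee_wpmul2l // lee_fin invr_ge0 ltW.
apply: le_trans (ge0_integral_split_le (lebN R n) (measurableC mB) wa0 wb0
  (F := fun x => phi ((L^-1)%:E * `|u x|))
  (g1 := fun x => phi ((a^-1)%:E * `|g x|))
  (g2 := fun x => phi ((b^-1)%:E * `|v x|)) _ _ _ _ _) _.
- by move=> x; exact/phi_ge0/arg_ge0.
- by move=> x _; exact/phi_ge0/arg_ge0.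
- by move=> x _; exact/phi_ge0/arg_ge0.
- by move=> x Bx; apply: weight (ug x Bx).
- by move=> x /contrapT Bx; apply: weight (uv x Bx).
rewrite setCK; apply: le_trans (leeD (lee_wpmul2l _ Ig) (lee_wpmul2l _ Iv)) _.
- by rewrite lee_fin ltW.
- by rewrite lee_fin ltW.
by rewrite !mule1 -EFinD wab.
Qed.

Lemma lux_split_le (B : set (RN R n)) (u g v : RN R n -> \bar R) (A K : R) :
  measurable B -> (0 < A)%R -> (0 < K)%R ->
  (forall x, ~ B x -> `|u x| <= A%:E * `|g x|) ->
  (forall x, B x -> `|u x| <= K%:E * `|v x|) ->
  lux phi setT u <= A%:E * lux phi (~` B) g + K%:E * lux phi B v.
Proof.
move=> mB A0 K0 ug uv; apply: ereal_inf_lincomb_le => //; [by move=> a []|by move=> b []|].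
move=> a b [a0 Ig] [b0 Iv]; apply: lux_le; first by rewrite addr_gt0 // mulr_gt0.
exact: modular_split_le Ig Iv.
Qed.

End luxemburg_norm.

Section luxemburg_norm_indicator.
Context (R : realType) (n : nat) (phi : \bar R -> \bar R) (B : set (RN R n)).
Hypotheses (yphi : young phi) (mB : measurable B).

Lemma integral_young_indic (r : R) :
  \int[lebN R n]_(x in setT) phi ((r^-1)%:E * `|(\1_B x)%:E|) = phi (r^-1)%:E * lebN R n B.
Proof.
have [phi0 _] := yphi; rewrite -integral_cst // [RHS]integral_mkcond.
apply: eq_integral => x _; rewrite /patch indicE.
by case: (x \in B); rewrite /= ?normr1 ?mule1 // normr0 mule0 phi0.
Qed.

Lemma lux_indic_le (m : R) (psi : \bar R -> \bar R) : lebN R n B = m%:E -> (0 < m)%R ->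
  (forall t, 0 <= t -> 0 <= psi t /\ phi (psi t) = t) ->
  lux phi setT (fun x => (\1_B x)%:E) <= einv (psi (einv (lebN R n B))).
Proof.
move=> muB m0 psiK; have [phi0 [_ _ phi_mono _ _]] := yphi.
rewrite muB /= ifN ?gt_eqF //.
have /psiK[] : 0 <= (m^-1)%:E by rewrite lee_fin invr_ge0 ltW.
case: (psi _) => [w| |] //= w0 phiw.
  have wn0 : w != 0%R.
    apply/eqP => w_eq0; move: phiw; rewrite w_eq0 phi0 => /eqP.
    by rewrite eq_sym eqe invr_eq0 gt_eqF.
  rewrite (negbTE wn0); apply: lux_le; first by rewrite invr_gt0 lt_def wn0 -lee_fin.
  by rewrite integral_young_indic invrK phiw muB -EFinM mulVf ?gt_eqF.
apply/lee_addgt0Pr => e e0; rewrite add0e; apply: lux_le => //.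
rewrite integral_young_indic muB.
apply: le_trans (lee_wpmul2r _ (phi_mono _ +oo _ (leey _))) _.
- by rewrite lee_fin ltW.
- by rewrite lee_fin invr_ge0 ltW.
- by rewrite phiw -EFinM mulVf ?gt_eqF.
Qed.

(* Scale (1 + m) / t: by convexity, phi (t / (1 + m)) m <= phi t m / (1 + m) <= 1. *)
Lemma lux_indic_lt_pinfty (m t : R) : lebN R n B = m%:E -> (0 < t)%R -> phi t%:E <= 1 ->
  lux phi setT (fun x => (\1_B x)%:E) < +oo.
Proof.
move=> muB t0 phit; have [phi0 [_ phi_ge0 phi_mono _ _]] := yphi.
have m0 : (0 <= m)%R by rewrite -lee_fin -muB measure_ge0.
pose l := ((1 + m)^-1)%R.
have l0 : (0 < l)%R by rewrite invr_gt0 ltr_pwDl.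
have l1 : (0 <= l <= 1)%R by rewrite ltW //= invr_le1 ?unitfE ?gt_eqF ?ltr_pwDl // lerDl.
apply: (@le_lt_trans _ _ ((l * t)^-1)%:E); last exact: ltry.
apply: lux_le; first by rewrite invr_gt0 mulr_gt0.
rewrite integral_young_indic invrK muB EFinM.
have m0E : 0 <= m%:E by rewrite lee_fin.
apply: le_trans (lee_wpmul2r m0E (young_scale_le yphi _ l1)) _; first by rewrite lee_fin ltW.
apply: le_trans (lee_wpmul2r m0E (lee_wpmul2l _ phit)) _; first by rewrite lee_fin ltW.
by rewrite mule1 -EFinM lee_fin ler_pdivrMl ?ltr_pwDl // mulr1 lerDr.
Qed.

End luxemburg_norm_indicator.

Lemma young_le1_of_lux_inv_powR (R : realType) (n : nat) (phi : \bar R -> \bar R)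
    (c alpha r : R) : young phi -> (0 < n)%N -> (0 < c)%R -> (0 < alpha)%R -> (0 < r)%R ->
  lux phi (~` [set x : RN R n | (enorm x < r)%R])
    (fun x => einv (c * enorm x `^ alpha)%:E) < +oo ->
  exists2 t : R, (0 < t)%R & phi t%:E <= 1.
Proof.
move=> yphi n0 c0 alpha0 r0 /ereal_inf_lt[_ [a [a0 Ia] <-] _].
have [S [D [mS muS SD]]] := exists_unit_measure_shell n0 r0.
pose D' := Num.max D r; have rD' : (r <= D')%R by rewrite le_max lexx orbT.
have cD0 : (0 < c * D' `^ alpha)%R by rewrite mulr_gt0 // powR_gt0 // (lt_le_trans r0).
have t0 : (0 < a^-1 * (c * D' `^ alpha)^-1)%R by rewrite mulr_gt0 // invr_gt0.
exists (a^-1 * (c * D' `^ alpha)^-1)%R => //.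
apply: young_le1_of_integral yphi mS muS _ _ (ltW t0) Ia => [x _|x /SD/andP[rx xD]].
  by rewrite mule_ge0 // lee_fin invr_ge0 ltW.
have x0 : (0 < enorm x)%R by exact: lt_le_trans rx.
have cx0 : (0 < c * enorm x `^ alpha)%R by rewrite mulr_gt0 // powR_gt0.
split; first by move=> /=; apply/negP; rewrite -leNgt.
rewrite /einv ifN ?gt_eqF // gee0_abs; last by rewrite lee_fin invr_ge0 ltW.
rewrite -EFinM lee_fin ler_pM2l ?invr_gt0 // lef_pV2 ?posrE // ler_pM2l //.
apply: ge0_ler_powR; rewrite ?nnegrE ?enorm_ge0 ?(ltW alpha0) //.
  exact: le_trans (ltW r0) rD'.
by rewrite le_max xD.
Qed.

Lemma abse_einv_subr_le (R : realType) (w : \bar R) (y z : R) : (z < y)%R -> y%:E <= w ->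
  `|einv (w - z%:E)| <= ((y - z)^-1)%:E.
Proof.
move=> zy; case: w => [w| |] //= yw; last by rewrite normr0 lee_fin invr_ge0 subr_ge0 ltW.
rewrite lee_fin in yw; have wz : (0 < w - z)%R by rewrite subr_gt0 (lt_le_trans zy).
rewrite /einv ifN ?gt_eqF // gee0_abs; last by rewrite lee_fin invr_ge0 ltW.
have yz : (0 < y - z)%R by rewrite subr_gt0.
by rewrite lee_fin lef_pV2 ?posrE //; lra.
Qed.

Section check_function.
Context (R : realType) (n : nat) (f : RN R n -> \bar R).

Lemma encl_radius_le (X : set (RN R n)) (c : RN R n) (t : R) :
  (0 <= t)%R -> X `<=` cball c t -> encl_radius X <= t%:E.
Proof. by move=> t0 Xc; apply: ereal_inf_lbound; exists t => //; split => //; exists c. Qed.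

Lemma fcheck_ge_inf x : ereal_inf (range f) <= fcheck f x.
Proof.
apply: ereal_sup_ubound; apply: (encl_radius_le (c := x)); first exact: enorm_ge0.
move=> y /= fy; exfalso; move: fy; apply/negP; rewrite -leNgt.
by apply: ereal_inf_lbound; exists y.
Qed.

(* Since h is radially increasing, the sublevel set {f < h x} lies in the
   closed ball of radius |x| about the origin. *)
Lemma fcheck_ge_powR (c alpha r : R) x : (0 < c)%R -> (0 < alpha)%R ->
  (forall y, ~ (enorm y < r)%R -> (c * enorm y `^ alpha)%:E <= f y) ->
  (r <= enorm x)%R -> (c * enorm x `^ alpha)%:E <= fcheck f x.
Proof.
move=> c0 alpha0 hf rx; apply: ereal_sup_ubound.
apply: (encl_radius_le (c := originN R n)); first exact: enorm_ge0.
move=> y /= fy; rewrite /cball /Defs.edist /= sqdist_origin -/(enorm y).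
have [yr|yr] := pselect (enorm y < r)%R; first by rewrite ltW // (lt_le_trans yr).
move: (le_lt_trans (hf y yr) fy); rewrite lte_fin ltr_pM2l // => hlt.
rewrite leNgt; apply/negP => xy; move: hlt; apply/negP; rewrite -leNgt.
by apply: ge0_ler_powR; rewrite ?ltW //= nnegrE enorm_ge0.
Qed.

(* Off the ball, \check f - z >= h - z >= h / 2. *)
Lemma abse_einv_fcheck_subr_le (c alpha r z : R) x :
  (0 < c)%R -> (0 < alpha)%R -> (0 < r)%R ->
  (forall y, ~ (enorm y < r)%R ->
     (c * enorm y `^ alpha)%:E <= f y /\ (2 * z <= c * enorm y `^ alpha)%R) ->
  (r <= enorm x)%R ->
  `|einv (fcheck f x - z%:E)| <= 2%:E * `|einv (c * enorm x `^ alpha)%:E|.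
Proof.
move=> c0 alpha0 r0 hf rx.
have ge_hx := fcheck_ge_powR c0 alpha0 (fun y ny => (hf y ny).1) rx.
have [_ zh] := hf x (elimT negP (negbT (le_gtF rx))).
set hx := (c * enorm x `^ alpha)%R in ge_hx zh *.
have hx0 : (0 < hx)%R by rewrite mulr_gt0 // powR_gt0 // (lt_le_trans r0).
apply: le_trans (abse_einv_subr_le _ ge_hx) _; first lra.
rewrite /einv ifN ?gt_eqF // gee0_abs; last by rewrite lee_fin invr_ge0 ltW.
by rewrite -EFinM lee_fin -[(2 * _)%R]invf_div lef_pV2 ?posrE ?divr_gt0 //; lra.
Qed.

End check_function.

Theorem lemma21 (R : realType) (N : nat) (hN : (0 < N)%N)
  (f : RN R N -> \bar R) (hf : forall x, f x <> -oo)
  (hmf : -oo < ereal_inf (range f))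
  (c alpha : R) (hc : (0 < c)%R) (halpha : (0 < alpha)%R) :
  let h : RN R N -> R := fun x => (c * enorm x `^ alpha)%R in
  (exists R0 : R, forall x, (R0 <= enorm x)%R -> (h x)%:E <= f x) ->
  let mf := ereal_inf (range f) in
  forall (z r : R), z%:E < mf -> (0 < r)%R ->
  let B : set (RN R N) := [set x | (enorm x < r)%R] in
  (forall x, ~ B x -> (h x)%:E <= f x /\ (2 * z <= h x)%R) ->
  forall phi : \bar R -> \bar R, young phi ->
  let lhs := lux phi setT (fun x => einv (fcheck f x - z%:E)) in
  let hnorm := lux phi (~` B) (fun x => einv (h x)%:E) in
  [/\ lhs <= 2%:E * hnorm
              + einv (mf - z%:E) * lux phi setT (fun x => (\1_B x)%:E),
      (forall psi : \bar R -> \bar R,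
         (forall t, 0 <= t -> 0 <= psi t /\ phi (psi t) = t) ->
         (forall s, 0 <= s -> psi (phi s) = s) ->
         lhs <= 2%:E * hnorm
                + einv (mf - z%:E) * einv (psi (einv (lebN R N B))))
    & (hnorm < +oo -> lhs < +oo)].
Proof.
(* The eventual growth bound is subsumed by the hypothesis on B. *)
move=> h _ mf z r zmf r0 B hB phi yphi lhs hnorm.
have mB : measurable B by exact: measurable_ball0.
have [m0 muB m0_gt0] := lebN_ball0_fin_gt0 N r0.
have Emf : mf = ereal_inf (range f) by [].
rewrite -Emf in hmf; clearbody mf.
case: mf Emf hmf zmf => [m| |] Emf hmf zmf; last by rewrite ltxx in hmf.
2: {
  have -> : lhs = 0.
    by apply: lux_eq0 => // x; have := fcheck_ge_inf f x; rewrite -Emf leye_eq => /eqP ->.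
  rewrite (_ : einv (+oo - z%:E) = 0) // !mul0e !adde0.
  have hnorm0 : 0 <= 2%:E * hnorm by rewrite mule_ge0 // lux_ge0.
  by split => // psi _ _; rewrite mul0e adde0. }
have zm : (z < m)%R by rewrite -lte_fin.
set K := ((m - z)^-1)%R; have K0 : (0 < K)%R by rewrite invr_gt0 subr_gt0.
have -> : einv (m%:E - z%:E) = K%:E by rewrite -EFinB /einv ifN // gt_eqF // subr_gt0.
have u_out x : ~ B x -> `|einv (fcheck f x - z%:E)| <= 2%:E * `|einv (h x)%:E|.
  by move=> /negP; rewrite -leNgt; exact: abse_einv_fcheck_subr_le.
have u_in x : B x -> `|einv (fcheck f x - z%:E)| <= K%:E * `|(\1_B x)%:E|.
  move=> Bx; rewrite indicE mem_set // abse1 mule1.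
  by apply: abse_einv_subr_le zm _; rewrite Emf; exact: fcheck_ge_inf.
have lhs_le : lhs <= 2%:E * hnorm + K%:E * lux phi setT (fun x => (\1_B x)%:E).
  apply: le_trans (lux_split_le yphi mB _ K0 u_out u_in) _ => //.
  by apply: leeD2l; apply: lee_wpmul2l; [rewrite lee_fin ltW|exact: lux_le_setT].
split => // [psi psiK _|hnorm_fin].
  apply: le_trans lhs_le _; apply: leeD2l; apply: lee_wpmul2l; first by rewrite lee_fin ltW.
  exact: lux_indic_le muB m0_gt0 psiK.
have [t t0 phit] := young_le1_of_lux_inv_powR yphi hN hc halpha r0 hnorm_fin.
apply: le_lt_trans lhs_le _; rewrite lte_add_pinfty // lte_mul_pinfty ?lee_fin ?(ltW K0) //.
exact: lux_indic_lt_pinfty muB t0 phit.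
Qed.
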